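(* Under the hypotheses of Lemma 2.2, let $\varphi(U)=\phi(U)-\phi(I)U+[T,U]$ with $T=P_1\phi(P_1)P_2+P_2\phi(P_2)P_1$. Then for all $U_{ij},V_{ij}\in\mathcal{U}_{ij}$ ($i,j=1,2$): (1) $\varphi(U_{11}\circ V_{12})=\varphi(U_{11})\circ V_{12}+U_{11}\circ\varphi(V_{12})$; (2) $\varphi(U_{22}\circ V_{21})=\varphi(U_{22})\circ V_{21}+U_{22}\circ\varphi(V_{21})$; (3) $\varphi(U_{11}\circ V_{21})=\varphi(U_{11})\circ V_{21}+U_{11}\circ\varphi(V_{21})$; (4) $\varphi(U_{22}\circ V_{12})=\varphi(U_{22})\circ V_{12}+U_{22}\circ\varphi(V_{12})$; (5) $\varphi(U_{11}\circ V_{11})=\varphi(U_{11})\circ V_{11}+U_{11}\circ\varphi(V_{11})$; (6) $\varphi(U_{22}\circ V_{22})=\varphi(U_{22})\circ V_{22}+U_{22}\circ\varphi(V_{22})$; (7) $\varphi(U_{12}\circ V_{21})=\varphi(U_{12})\circ V_{21}+U_{12}\circ\varphi(V_{21})$; (8) $\varphi(U_{21}\circ V_{12})=\varphi(U_{21})\circ V_{12}+U_{21}\circ\varphi(V_{12})$.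
   Context: $\mathcal{U}=\begin{pmatrix}\mathcal{A}&\mathcal{M}\\ \mathcal{N}&\mathcal{B}\end{pmatrix}$ is a generalized matrix ring: $\mathcal{A},\mathcal{B}$ unital 2-torsion free rings, $\mathcal{M}$ a unital $(\mathcal{A},\mathcal{B})$-bimodule faithful on both sides (if $A\mathcal{M}=\{0\}$ then $A=0$; if $\mathcal{M}B=\{0\}$ then $B=0$), $\mathcal{N}$ a unital $(\mathcal{B},\mathcal{A})$-bimodule, with bimodule pairings $MN\in\mathcal{A}$, $NM\in\mathcal{B}$ satisfying $(MN)M'=M(NM')$, $(NM)N'=N(MN')$; $\mathcal{U}$ consists of $2\times2$ matrices with usual matrix operations and identity $I$. The hypotheses of Lemma 2.2: $\phi:\mathcal{U}\to\mathcal{U}$ is additive and $\phi(U)\circ V+U\circ\phi(V)=0$ whenever $UV=VU=0$. $X\circ Y=XY+YX$, $[X,Y]=XY-YX$. $P_1=\mathrm{diag}(I_{\mathcal{A}},0)$, $P_2=\mathrm{diag}(0,I_{\mathcal{B}})$, and $\mathcal{U}_{ij}=P_i\mathcal{U}P_j$. *)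

From HB Require Import structures.
From mathcomp Require Import all_boot all_order all_algebra.
Set Implicit Arguments. Unset Strict Implicit. Unset Printing Implicit Defensive.
Import GRing.Theory.
Local Open Scope ring_scope.

(* A generalized matrix ring datum: unital rings A, B, a unital
   (A,B)-bimodule M, a unital (B,A)-bimodule N, and bimodule pairings
   M x N -> A, N x M -> B satisfying the Morita-context axioms. *)
Record GMR := {
  gA : ringType; gB : ringType; gM : zmodType; gN : zmodType;
  lAM : gA -> gM -> gM;
  rMB : gM -> gB -> gM;
  lBN : gB -> gN -> gN;
  rNA : gN -> gA -> gN;
  pMN : gM -> gN -> gA;
  pNM : gN -> gM -> gB;
  lAM_addl : forall a a' m, lAM (a + a') m = lAM a m + lAM a' m;
  lAM_addr : forall a m m', lAM a (m + m') = lAM a m + lAM a m';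
  lAM_mul : forall a a' m, lAM (a * a') m = lAM a (lAM a' m);
  lAM_1 : forall m, lAM 1 m = m;
  rMB_addl : forall m m' b, rMB (m + m') b = rMB m b + rMB m' b;
  rMB_addr : forall m b b', rMB m (b + b') = rMB m b + rMB m b';
  rMB_mul : forall m b b', rMB m (b * b') = rMB (rMB m b) b';
  rMB_1 : forall m, rMB m 1 = m;
  M_bimod : forall a m b, rMB (lAM a m) b = lAM a (rMB m b);
  lBN_addl : forall b b' n, lBN (b + b') n = lBN b n + lBN b' n;
  lBN_addr : forall b n n', lBN b (n + n') = lBN b n + lBN b n';
  lBN_mul : forall b b' n, lBN (b * b') n = lBN b (lBN b' n);
  lBN_1 : forall n, lBN 1 n = n;
  rNA_addl : forall n n' a, rNA (n + n') a = rNA n a + rNA n' a;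
  rNA_addr : forall n a a', rNA n (a + a') = rNA n a + rNA n a';
  rNA_mul : forall n a a', rNA n (a * a') = rNA (rNA n a) a';
  rNA_1 : forall n, rNA n 1 = n;
  N_bimod : forall b n a, rNA (lBN b n) a = lBN b (rNA n a);
  pMN_addl : forall m m' n, pMN (m + m') n = pMN m n + pMN m' n;
  pMN_addr : forall m n n', pMN m (n + n') = pMN m n + pMN m n';
  pMN_lA : forall a m n, pMN (lAM a m) n = a * pMN m n;
  pMN_rA : forall m n a, pMN m (rNA n a) = pMN m n * a;
  pMN_bal : forall m b n, pMN (rMB m b) n = pMN m (lBN b n);
  pNM_addl : forall n n' m, pNM (n + n') m = pNM n m + pNM n' m;
  pNM_addr : forall n m m', pNM n (m + m') = pNM n m + pNM n m';
  pNM_lB : forall b n m, pNM (lBN b n) m = b * pNM n m;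
  pNM_rB : forall n m b, pNM n (rMB m b) = pNM n m * b;
  pNM_bal : forall n a m, pNM (rNA n a) m = pNM n (lAM a m);
  assoc_MNM : forall m n m', lAM (pMN m n) m' = rMB m (pNM n m');
  assoc_NMN : forall n m n', lBN (pNM n m) n' = rNA n (pMN m n')
}.

Section Mat.
Variable G : GMR.

(* elements of U = [[A, M], [N, B]] *)
Record mat := Mat { e11 : gA G; e12 : gM G; e21 : gN G; e22 : gB G }.

Definition mzero : mat := Mat 0 0 0 0.
Definition mone : mat := Mat 1 0 0 1.
Definition madd (X Y : mat) : mat :=
  Mat (e11 X + e11 Y) (e12 X + e12 Y) (e21 X + e21 Y) (e22 X + e22 Y).
Definition mopp (X : mat) : mat :=
  Mat (- e11 X) (- e12 X) (- e21 X) (- e22 X).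
Definition msub (X Y : mat) : mat := madd X (mopp Y).
Definition mmul (X Y : mat) : mat :=
  Mat (e11 X * e11 Y + pMN (e12 X) (e21 Y))
      (lAM (e11 X) (e12 Y) + rMB (e12 X) (e22 Y))
      (lBN (e22 X) (e21 Y) + rNA (e21 X) (e11 Y))
      (pNM (e21 X) (e12 Y) + e22 X * e22 Y).
Definition mcirc (X Y : mat) : mat := madd (mmul X Y) (mmul Y X).
Definition mlie (X Y : mat) : mat := msub (mmul X Y) (mmul Y X).

Definition P1 : mat := Mat 1 0 0 0.
Definition P2 : mat := Mat 0 0 0 1.

End Mat.

Definition two_torsion_free (R : ringType) : Prop :=
  forall x : R, x + x = 0 -> x = 0.

Definition M_faithful (G : GMR) : Prop :=
  (forall a : gA G, (forall m : gM G, lAM a m = 0) -> a = 0) /\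
  (forall b : gB G, (forall m : gM G, rMB m b = 0) -> b = 0).

Definition lemma22_hyp (G : GMR) (phi : mat G -> mat G) : Prop :=
  (forall X Y, phi (madd X Y) = madd (phi X) (phi Y)) /\
  (forall U V, mmul U V = mzero G -> mmul V U = mzero G ->
     madd (mcirc (phi U) V) (mcirc U (phi V)) = mzero G).

Definition Tphi (G : GMR) (phi : mat G -> mat G) : mat G :=
  madd (mmul (mmul (P1 G) (phi (P1 G))) (P2 G))
       (mmul (mmul (P2 G) (phi (P2 G))) (P1 G)).

Definition varphi (G : GMR) (phi : mat G -> mat G) (U : mat G) : mat G :=
  madd (msub (phi U) (mmul (phi (mone G)) U)) (mlie (Tphi phi) U).

Definition corner (G : GMR) (Pi Pj : mat G) (X : mat G) : mat G :=
  mmul (mmul Pi X) Pj.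

Definition jder_at (G : GMR) (phi : mat G -> mat G) (U V : mat G) : Prop :=
  varphi phi (mcirc U V) =
  madd (mcirc (varphi phi U) V) (mcirc U (varphi phi V)).

From HB Require Import structures.
From mathcomp Require Import all_boot all_order all_algebra.
Set Implicit Arguments. Unset Strict Implicit. Unset Printing Implicit Defensive.
Import GRing.Theory.
Local Open Scope ring_scope.

(* Zero-product pairs pin phi down on the four corners.  Orthogonality of [a]
   and [b], of [m] and [m'], and of [a + a m] and [b - m b] shows that, off the
   diagonal, phi sends each corner piece into the opposite one through balanced
   skew maps crossM : M -> N and crossN : N -> M, and that once phi(I) X and
   [T, X] are subtracted, what remains acts on the corners through maps derA,
   derB, derM, derN obeying the Leibniz rules of the bimodule structure.
   Faithfulness of M makes phi(P1), phi(P2) central and derA, derB derivations.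
   The corrected map varphi inherits the zero-product property and kills I, so
   for the idempotents E = [1 + m n; n] [1, - m] the relation E (1 - E) = 0
   forces derA (m n) = derM(m) n + m derN(n) and derB (n m) = n derM(m) + derN(n) m,
   2-torsion freeness cancelling the factor 2.  Each of the eight identities is
   then a computation on the four entries. *)

Section AdditiveMap.
Variables (V W : zmodType) (f : V -> W).
Hypothesis f_add : forall x y, f (x + y) = f x + f y.

Lemma additive_map0 : f 0 = 0.
Proof. by apply: (addrI (f 0)); rewrite -f_add !addr0. Qed.

Lemma additive_mapN x : f (- x) = - f x.
Proof. by apply: (addrI (f x)); rewrite -f_add !subrr additive_map0. Qed.

End AdditiveMap.

Lemma two_torsion_free_inj (R : nzRingType) : two_torsion_free R ->
  forall x y : R, x + x = y + y -> x = y.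
Proof.
move=> h2 x y e; apply/eqP; rewrite -subr_eq0; apply/eqP; apply: h2.
by rewrite addrACA e addrACA !subrr addr0.
Qed.

Section BimoduleArithmetic.
Variable G : GMR.
Implicit Types (a : gA G) (b : gB G) (m : gM G) (n : gN G).

Lemma lAM0l m : lAM 0 m = 0.
Proof. exact: (additive_map0 (fun x y => lAM_addl x y m)). Qed.
Lemma lAM0r a : lAM a 0 = 0.
Proof. exact: (additive_map0 (lAM_addr a)). Qed.
Lemma lAMNl a m : lAM (- a) m = - lAM a m.
Proof. exact: (additive_mapN (fun x y => lAM_addl x y m)). Qed.
Lemma lAMNr a m : lAM a (- m) = - lAM a m.
Proof. exact: (additive_mapN (lAM_addr a)). Qed.
Lemma rMB0l b : rMB 0 b = 0.
Proof. exact: (additive_map0 (fun x y => rMB_addl x y b)). Qed.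
Lemma rMB0r m : rMB m 0 = 0.
Proof. exact: (additive_map0 (rMB_addr m)). Qed.
Lemma rMBNl m b : rMB (- m) b = - rMB m b.
Proof. exact: (additive_mapN (fun x y => rMB_addl x y b)). Qed.
Lemma rMBNr m b : rMB m (- b) = - rMB m b.
Proof. exact: (additive_mapN (rMB_addr m)). Qed.
Lemma lBN0l n : lBN 0 n = 0.
Proof. exact: (additive_map0 (fun x y => lBN_addl x y n)). Qed.
Lemma lBN0r b : lBN b 0 = 0.
Proof. exact: (additive_map0 (lBN_addr b)). Qed.
Lemma lBNNl b n : lBN (- b) n = - lBN b n.
Proof. exact: (additive_mapN (fun x y => lBN_addl x y n)). Qed.
Lemma lBNNr b n : lBN b (- n) = - lBN b n.
Proof. exact: (additive_mapN (lBN_addr b)). Qed.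
Lemma rNA0l a : rNA 0 a = 0.
Proof. exact: (additive_map0 (fun x y => rNA_addl x y a)). Qed.
Lemma rNA0r n : rNA n 0 = 0.
Proof. exact: (additive_map0 (rNA_addr n)). Qed.
Lemma rNANl n a : rNA (- n) a = - rNA n a.
Proof. exact: (additive_mapN (fun x y => rNA_addl x y a)). Qed.
Lemma rNANr n a : rNA n (- a) = - rNA n a.
Proof. exact: (additive_mapN (rNA_addr n)). Qed.
Lemma pMN0l n : pMN 0 n = 0.
Proof. exact: (additive_map0 (fun x y => pMN_addl x y n)). Qed.
Lemma pMN0r m : pMN m 0 = 0.
Proof. exact: (additive_map0 (pMN_addr m)). Qed.
Lemma pMNNl m n : pMN (- m) n = - pMN m n.
Proof. exact: (additive_mapN (fun x y => pMN_addl x y n)). Qed.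
Lemma pMNNr m n : pMN m (- n) = - pMN m n.
Proof. exact: (additive_mapN (pMN_addr m)). Qed.
Lemma pNM0l m : pNM 0 m = 0.
Proof. exact: (additive_map0 (fun x y => pNM_addl x y m)). Qed.
Lemma pNM0r n : pNM n 0 = 0.
Proof. exact: (additive_map0 (pNM_addr n)). Qed.
Lemma pNMNl n m : pNM (- n) m = - pNM n m.
Proof. exact: (additive_mapN (fun x y => pNM_addl x y m)). Qed.
Lemma pNMNr n m : pNM n (- m) = - pNM n m.
Proof. exact: (additive_mapN (pNM_addr n)). Qed.

End BimoduleArithmetic.

Ltac gmr_simpl := rewrite ?(mulr0, mul0r, addr0, add0r, oppr0, subr0, sub0r, mulr1, mul1r,
  opprK, mulrN, mulNr, lAM0l, lAM0r, rMB0l, rMB0r, lBN0l, lBN0r, rNA0l, rNA0r,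
  pMN0l, pMN0r, pNM0l, pNM0r, lAM_1, rMB_1, lBN_1, rNA_1, lAMNl, lAMNr, rMBNl, rMBNr,
  lBNNl, lBNNr, rNANl, rNANr, pMNNl, pMNNr, pNMNl, pNMNr).

(* Cancellation in an abelian group: the terms of a sum are permuted until
   each [x] sits next to a [- x]. *)
Ltac move_front a := match goal with
  | |- ?c + _ = _ => unify c a
  | |- ?c = _ => unify c a
  | |- _ => first [rewrite [in LHS](addrCA _ a) | rewrite [in LHS](addrC _ a)]; move_front a
  end.
Ltac cancel_pair := match goal with
  | |- context [?a + ?r] => match r with context [- ?b] =>
      unify a b; move_front (- a); move_front a; rewrite ?addNKr ?addrN end
  | |- context [- ?c + ?r] => match r with context [?b] =>
      unify b c; move_front c; move_front (- c); rewrite ?addKr ?addNr end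
  end.
Ltac zmod_cancel :=
  apply/eqP; rewrite -subr_eq0; apply/eqP; rewrite ?opprD ?opprK; gmr_simpl;
  rewrite ?opprD ?opprK -?addrA; repeat (cancel_pair; rewrite -?addrA); try done.

Lemma eq_from_difference (V : zmodType) (x y t1 t2 : V) :
  x = y -> t1 - t2 - (x - y) = 0 -> t1 = t2.
Proof. by move=> ->; rewrite subrr subr0 => /eqP; rewrite subr_eq0 => /eqP. Qed.

Lemma eq_from_opp_difference (V : zmodType) (x y t1 t2 : V) :
  x = y -> t1 - t2 + (x - y) = 0 -> t1 = t2.
Proof. by move=> ->; rewrite subrr addr0 => /eqP; rewrite subr_eq0 => /eqP. Qed.

(* Closes [t1 = t2] when [t1 - t2] and [x - y] agree up to sign, for [h : x = y]. *)
Ltac cancel_with h :=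
  first [ refine (eq_from_difference h _); zmod_cancel; done
        | refine (eq_from_opp_difference h _); zmod_cancel; done ].

Section JordanOrthogonal.
Variable R : pzRingType.
Implicit Types (f g : R -> R) (C T U V E : R).

Definition jordan_orthogonal f := forall U V, U * V = 0 -> V * U = 0 ->
  f U * V + V * f U + (U * f V + f V * U) = 0.

Lemma jordan_orthogonalD f g : jordan_orthogonal f -> jordan_orthogonal g ->
  jordan_orthogonal (fun X => f X + g X).
Proof.
move=> hf hg U V UV VU.
have h : f U * V + V * f U + (U * f V + f V * U)
       + (g U * V + V * g U + (U * g V + g V * U)) = 0 by rewrite hf // hg // addr0.
by rewrite !mulrDl !mulrDr; cancel_with h.
Qed.

Lemma jordan_orthogonalN f : jordan_orthogonal f -> jordan_orthogonal (fun X => - f X).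
Proof. by move=> hf U V UV VU; rewrite !mulNr !mulrN -!opprD hf // oppr0. Qed.

Lemma jordan_orthogonal_central C : (forall X, C * X = X * C) ->
  jordan_orthogonal (fun X => C * X).
Proof.
move=> hC U V UV VU.
by rewrite -!mulrA UV VU mulr0 (hC U) (hC V) !mulrA UV VU !mul0r !addr0.
Qed.

Lemma jordan_orthogonal_inner T : jordan_orthogonal (fun X => T * X - X * T).
Proof.
move=> U V UV VU.
rewrite !mulrBl !mulrBr !mulrA UV VU !mul0r -(mulrA T U V) -(mulrA T V U) UV VU !mulr0.
zmod_cancel.
Qed.

(* From E (1 - E) = (1 - E) E = 0. *)
Lemma jordan_orthogonal_idempotent (D : R -> R) :
  (forall x y, D (x + y) = D x + D y) -> D 1 = 0 -> jordan_orthogonal D ->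
  forall E, E * E = E -> D E + D E = E * D E + D E * E + (E * D E + D E * E).
Proof.
move=> D_add D1 hD E EE.
have h := hD E (1 - E) (ltac:(by rewrite mulrBr mulr1 EE subrr))
                      (ltac:(by rewrite mulrBl mul1r EE subrr)).
rewrite D_add (additive_mapN D_add) D1 add0r !mulrBr !mulrBl !mulr1 !mul1r !mulrN !mulNr in h.
cancel_with h.
Qed.

End JordanOrthogonal.

Section MatrixRing.
Variable G : GMR.
Implicit Types (X Y Z : mat G) (a : gA G) (b : gB G) (m : gM G) (n : gN G).

Lemma mat_ext X Y :
  e11 X = e11 Y -> e12 X = e12 Y -> e21 X = e21 Y -> e22 X = e22 Y -> X = Y.
Proof. by case: X => ????; case: Y => ???? /= -> -> -> ->. Qed.

Definition mat_tuple X := (e11 X, e12 X, e21 X, e22 X).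
Definition tuple_mat (t : gA G * gM G * gN G * gB G) : mat G :=
  Mat t.1.1.1 t.1.1.2 t.1.2 t.2.
Lemma mat_tupleK : cancel mat_tuple tuple_mat. Proof. by case. Qed.

HB.instance Definition _ := Equality.copy (mat G) (can_type mat_tupleK).
HB.instance Definition _ := Choice.copy (mat G) (can_type mat_tupleK).

Lemma maddA : associative (@madd G).
Proof. by move=> X Y Z; apply: mat_ext; apply: addrA. Qed.
Lemma maddC : commutative (@madd G).
Proof. by move=> X Y; apply: mat_ext; apply: addrC. Qed.
Lemma madd0 : left_id (mzero G) (@madd G).
Proof. by move=> X; apply: mat_ext; apply: add0r. Qed.
Lemma maddN : left_inverse (mzero G) (@mopp G) (@madd G).
Proof. by move=> X; apply: mat_ext; apply: addNr. Qed.

Lemma mmulA : associative (@mmul G).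
Proof.
move=> X Y Z; apply: mat_ext => /=.
- rewrite mulrDl mulrDr pMN_addl pMN_addr !mulrA pMN_lA pMN_rA pMN_bal; zmod_cancel.
- rewrite lAM_addl lAM_addr rMB_addl rMB_addr !lAM_mul !rMB_mul !M_bimod assoc_MNM.
  zmod_cancel.
- rewrite lBN_addl lBN_addr rNA_addl rNA_addr !lBN_mul !rNA_mul !N_bimod assoc_NMN.
  zmod_cancel.
- rewrite mulrDl mulrDr pNM_addl pNM_addr !mulrA pNM_lB pNM_rB pNM_bal; zmod_cancel.
Qed.
Lemma mmul1 : left_id (mone G) (@mmul G).
Proof. by move=> X; apply: mat_ext => /=; gmr_simpl. Qed.
Lemma mmulr1 : right_id (mone G) (@mmul G).
Proof. by move=> X; apply: mat_ext => /=; gmr_simpl. Qed.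
Lemma mmulDl : left_distributive (@mmul G) (@madd G).
Proof.
move=> X Y Z; apply: mat_ext => /=;
  rewrite ?mulrDl ?pMN_addl ?lAM_addl ?rMB_addl ?lBN_addl ?rNA_addl ?pNM_addl; zmod_cancel.
Qed.
Lemma mmulDr : right_distributive (@mmul G) (@madd G).
Proof.
move=> X Y Z; apply: mat_ext => /=;
  rewrite ?mulrDr ?pMN_addr ?lAM_addr ?rMB_addr ?lBN_addr ?rNA_addr ?pNM_addr; zmod_cancel.
Qed.

HB.instance Definition _ := GRing.isPzRing.Build (mat G)
  maddA maddC madd0 maddN mmulA mmul1 mmulr1 mmulDl mmulDr.

Definition iA (a : gA G) : mat G := Mat a 0 0 0.
Definition iM (m : gM G) : mat G := Mat 0 m 0 0.
Definition iN (n : gN G) : mat G := Mat 0 0 n 0.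
Definition iB (b : gB G) : mat G := Mat 0 0 0 b.

Lemma iAD a a' : iA (a + a') = iA a + iA a'. Proof. by apply: mat_ext => /=; gmr_simpl. Qed.
Lemma iMD m m' : iM (m + m') = iM m + iM m'. Proof. by apply: mat_ext => /=; gmr_simpl. Qed.
Lemma iND n n' : iN (n + n') = iN n + iN n'. Proof. by apply: mat_ext => /=; gmr_simpl. Qed.
Lemma iBD b b' : iB (b + b') = iB b + iB b'. Proof. by apply: mat_ext => /=; gmr_simpl. Qed.

Lemma mat_decomp a m n b : Mat a m n b = iA a + iM m + (iN n + iB b).
Proof. by apply: mat_ext => /=; gmr_simpl. Qed.

Lemma mone_decomp : mone G = iA 1 + iB 1.
Proof. by apply: mat_ext => /=; gmr_simpl. Qed.

Lemma corner11 X : corner (P1 G) (P1 G) X = iA (e11 X).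
Proof. by apply: mat_ext => /=; gmr_simpl. Qed.
Lemma corner12 X : corner (P1 G) (P2 G) X = iM (e12 X).
Proof. by apply: mat_ext => /=; gmr_simpl. Qed.
Lemma corner21 X : corner (P2 G) (P1 G) X = iN (e21 X).
Proof. by apply: mat_ext => /=; gmr_simpl. Qed.
Lemma corner22 X : corner (P2 G) (P2 G) X = iB (e22 X).
Proof. by apply: mat_ext => /=; gmr_simpl. Qed.

(* [idem_mn m n] is the column [1 + m n; n] times the row [1, - m], whose
   product in the other order is [1]. *)
Definition idem_mn m n : mat G := Mat (1 + pMN m n) (- m - lAM (pMN m n) m) n (- pNM n m).

Lemma idem_mnK m n : idem_mn m n * idem_mn m n = idem_mn m n.
Proof.
apply: mat_ext => /=.
- rewrite mulrDl !mulrDr pMN_addl; gmr_simpl; rewrite pMN_lA; zmod_cancel.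
- rewrite lAM_addl !lAM_addr rMB_addl; gmr_simpl; rewrite M_bimod -assoc_MNM; zmod_cancel.
- rewrite rNA_addr; gmr_simpl; rewrite assoc_NMN; zmod_cancel.
- rewrite pNM_addr; gmr_simpl; rewrite -pNM_bal -assoc_NMN pNM_lB; zmod_cancel.
Qed.

End MatrixRing.

Section Flip.
Variable G : GMR.

(* The same ring with the two diagonal corners exchanged: [[B, N], [M, A]]. *)
Definition flip_gmr : GMR :=
  @Build_GMR (gB G) (gA G) (gN G) (gM G) (@lBN G) (@rNA G) (@lAM G) (@rMB G) (@pNM G) (@pMN G)
  (@lBN_addl G) (@lBN_addr G) (@lBN_mul G) (@lBN_1 G)
  (@rNA_addl G) (@rNA_addr G) (@rNA_mul G) (@rNA_1 G) (@N_bimod G)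
  (@lAM_addl G) (@lAM_addr G) (@lAM_mul G) (@lAM_1 G)
  (@rMB_addl G) (@rMB_addr G) (@rMB_mul G) (@rMB_1 G) (@M_bimod G)
  (@pNM_addl G) (@pNM_addr G) (@pNM_lB G) (@pNM_rB G) (@pNM_bal G)
  (@pMN_addl G) (@pMN_addr G) (@pMN_lA G) (@pMN_rA G) (@pMN_bal G)
  (@assoc_NMN G) (@assoc_MNM G).

Definition flip_mat (X : mat G) : mat flip_gmr :=
  @Mat flip_gmr (e22 X) (e21 X) (e12 X) (e11 X).
Definition unflip_mat (X : mat flip_gmr) : mat G := @Mat G (e22 X) (e21 X) (e12 X) (e11 X).
Definition flip_map (phi : mat G -> mat G) (X : mat flip_gmr) : mat flip_gmr :=
  flip_mat (phi (unflip_mat X)).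

Lemma unflip_matK : cancel unflip_mat flip_mat. Proof. by case. Qed.

Lemma flip_matD X Y : flip_mat (madd X Y) = madd (flip_mat X) (flip_mat Y).
Proof. exact: mat_ext. Qed.
Lemma flip_matM X Y : flip_mat (mmul X Y) = mmul (flip_mat X) (flip_mat Y).
Proof. by apply: mat_ext => /=; rewrite addrC. Qed.
Lemma unflip_matD X Y : unflip_mat (madd X Y) = madd (unflip_mat X) (unflip_mat Y).
Proof. exact: mat_ext. Qed.
Lemma unflip_matM X Y : unflip_mat (mmul X Y) = mmul (unflip_mat X) (unflip_mat Y).
Proof. by apply: mat_ext => /=; rewrite addrC. Qed.

Lemma flip_map_hyp phi : lemma22_hyp phi -> lemma22_hyp (flip_map phi).
Proof.
case=> phi_add phi_orth; split=> [X Y | U V UV VU].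
  by rewrite /flip_map unflip_matD phi_add flip_matD.
have UV' : mmul (unflip_mat U) (unflip_mat V) = mzero G.
  by rewrite -unflip_matM UV; apply: mat_ext.
have VU' : mmul (unflip_mat V) (unflip_mat U) = mzero G.
  by rewrite -unflip_matM VU; apply: mat_ext.
have := congr1 flip_mat (phi_orth _ _ UV' VU').
by rewrite /mcirc !flip_matD !flip_matM !unflip_matK /flip_map => ->; apply: mat_ext.
Qed.

End Flip.

Section Lemma22Hyp.
Variables (G : GMR) (phi : mat G -> mat G).
Hypothesis hphi : lemma22_hyp phi.

Lemma lemma22_add X Y : phi (X + Y) = phi X + phi Y.
Proof. exact: hphi.1. Qed.

Lemma lemma22_orthogonal U V : U * V = 0 -> V * U = 0 ->
  phi U * V + V * phi U + (U * phi V + phi V * U) = 0.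
Proof. exact: hphi.2. Qed.

End Lemma22Hyp.

Section PhiOnM.
Variables (G : GMR) (phi : mat G -> mat G).
Implicit Types (a : gA G) (b : gB G) (m : gM G) (n : gN G).
Hypothesis hphi : lemma22_hyp phi.
Hypotheses (hA : two_torsion_free (gA G)) (hB : two_torsion_free (gB G)).

Let phi_add := lemma22_add hphi.
Let phi_orth := lemma22_orthogonal hphi.

Lemma phi_iA_iB a b :
  phi (iA a) * iB b + iB b * phi (iA a) + (iA a * phi (iB b) + phi (iB b) * iA a) = 0.
Proof. by apply: phi_orth; apply: mat_ext => /=; gmr_simpl. Qed.

Lemma phi_iB_e11 b : e11 (phi (iB b)) = 0.
Proof. by apply: hA; have /(congr1 (@e11 G)) /= := phi_iA_iB 1 b; gmr_simpl. Qed.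

Lemma phi_iA_e22 a : e22 (phi (iA a)) = 0.
Proof. by apply: hB; have /(congr1 (@e22 G)) /= := phi_iA_iB a 1; gmr_simpl. Qed.

Lemma phi_iA_e12 a : e12 (phi (iA a)) = - lAM a (e12 (phi (P2 G))).
Proof.
have /(congr1 (@e12 G)) /= := phi_iA_iB a 1; gmr_simpl.
by move/eqP; rewrite addr_eq0 => /eqP.
Qed.

Lemma phi_iB_e21 b : e21 (phi (iB b)) = - lBN b (e21 (phi (P1 G))).
Proof.
have /(congr1 (@e21 G)) /= := phi_iA_iB 1 b; gmr_simpl.
by move/eqP; rewrite addrC addr_eq0 => /eqP.
Qed.

Lemma phi_iB_e12 b : e12 (phi (iB b)) = rMB (e12 (phi (P2 G))) b.
Proof.
have /(congr1 (@e12 G)) /= := phi_iA_iB 1 b; gmr_simpl.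
rewrite phi_iA_e12 lAM_1 rMBNl.
by move/eqP; rewrite addrC addr_eq0 opprK => /eqP.
Qed.

Lemma phi_iA_e21 a : e21 (phi (iA a)) = rNA (e21 (phi (P1 G))) a.
Proof.
have /(congr1 (@e21 G)) /= := phi_iA_iB a 1; gmr_simpl.
rewrite phi_iB_e21 lBN_1 rNANl.
by move/eqP; rewrite addr_eq0 opprK => /eqP.
Qed.

Lemma phi_iM_iM m m' :
  phi (iM m) * iM m' + iM m' * phi (iM m) + (iM m * phi (iM m') + phi (iM m') * iM m) = 0.
Proof. by apply: phi_orth; apply: mat_ext => /=; gmr_simpl. Qed.

Lemma crossM_skewl m m' : pMN m (e21 (phi (iM m'))) + pMN m' (e21 (phi (iM m))) = 0.
Proof. by have /(congr1 (@e11 G)) /= := phi_iM_iM m m'; gmr_simpl; rewrite addrC. Qed.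

Lemma crossM_skewr m m' : pNM (e21 (phi (iM m))) m' + pNM (e21 (phi (iM m'))) m = 0.
Proof. by have /(congr1 (@e22 G)) /= := phi_iM_iM m m'; gmr_simpl. Qed.

Lemma phi_iAM_iBM a m b :
  let U := iA a + iM (lAM a m) in let V := iB b - iM (rMB m b) in
  let phiU := phi (iA a) + phi (iM (lAM a m)) in
  let phiV := phi (iB b) - phi (iM (rMB m b)) in
  phiU * V + V * phiU + (U * phiV + phiV * U) = 0.
Proof.
rewrite /= -(additive_mapN phi_add) -!phi_add.
by apply: phi_orth; apply: mat_ext => /=; gmr_simpl; rewrite ?M_bimod ?subrr ?addNr.
Qed.

Lemma phi_iM_e21_rMB m b : e21 (phi (iM (rMB m b))) = lBN b (e21 (phi (iM m))).
Proof.
have /(congr1 (@e21 G)) /= := phi_iAM_iBM 1 m b; gmr_simpl.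
by rewrite phi_iA_e21 phi_iB_e21 lBN_addr; gmr_simpl => H; cancel_with H.
Qed.

Lemma phi_iM_e21_lAM a m : e21 (phi (iM (lAM a m))) = rNA (e21 (phi (iM m))) a.
Proof.
have /(congr1 (@e21 G)) /= := phi_iAM_iBM a m 1; gmr_simpl.
by rewrite phi_iA_e21 phi_iB_e21 rNA_addl; gmr_simpl => H; cancel_with H.
Qed.

Lemma phi_iM_e11 m : e11 (phi (iM m)) = - pMN m (e21 (phi (P1 G))).
Proof.
have skew0 : pMN m (e21 (phi (iM m))) = 0 by apply: hA; apply: crossM_skewl.
have /(congr1 (@e11 G)) /= := phi_iAM_iBM 1 m 1; gmr_simpl.
rewrite phi_iA_e21 phi_iB_e21 phi_iB_e11 !pMN_addr; gmr_simpl.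
rewrite !skew0; gmr_simpl => H.
by apply/eqP; rewrite -addr_eq0; apply/eqP; apply: hA; cancel_with H.
Qed.

Lemma phi_iM_e22 m : e22 (phi (iM m)) = pNM (e21 (phi (P1 G))) m.
Proof.
have skew0 : pNM (e21 (phi (iM m))) m = 0 by apply: hB; apply: crossM_skewr.
have /(congr1 (@e22 G)) /= := phi_iAM_iBM 1 m 1; gmr_simpl.
rewrite phi_iA_e21 phi_iB_e21 phi_iA_e22 !pNM_addl; gmr_simpl.
rewrite !skew0; gmr_simpl => H.
by apply/eqP; rewrite -subr_eq0; apply/eqP; apply: hB; cancel_with H.
Qed.

Lemma phi_iM_e12_mixed a m b :
  rMB (e12 (phi (iM (lAM a m)))) b = lAM (e11 (phi (iA a))) (rMB m b)
    + lAM a (e12 (phi (iM (rMB m b)))) - lAM a (rMB m (e22 (phi (iB b)))).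
Proof.
have /(congr1 (@e12 G)) /= := phi_iAM_iBM a m b; gmr_simpl.
rewrite phi_iA_e12 phi_iB_e12 phi_iA_e22 phi_iB_e11 !phi_iM_e11 !phi_iM_e22; gmr_simpl.
rewrite !lAM_addl !rMB_addr !lAM_addr !rMB_addl; gmr_simpl.
by rewrite !assoc_MNM !M_bimod => H; cancel_with H.
Qed.

Lemma phi_iM_e12_lAM a m :
  e12 (phi (iM (lAM a m))) = lAM (e11 (phi (iA a))) m + lAM a (e12 (phi (iM m)))
    - lAM a (rMB m (e22 (phi (P2 G)))).
Proof. by have := phi_iM_e12_mixed a m 1; rewrite !rMB_1. Qed.

Lemma phi_iM_e12_rMB m b :
  e12 (phi (iM (rMB m b))) = rMB (e12 (phi (iM m))) b - lAM (e11 (phi (P1 G))) (rMB m b)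
    + rMB m (e22 (phi (iB b))).
Proof. by have := phi_iM_e12_mixed 1 m b; rewrite !lAM_1 => H; cancel_with H. Qed.

Lemma lAM_phiP1 m : lAM (e11 (phi (P1 G))) m = rMB m (e22 (phi (P2 G))).
Proof.
have := phi_iM_e12_mixed 1 m 1; rewrite !lAM_1 !rMB_1 => H.
by apply/eqP; rewrite -subr_eq0; apply/eqP; cancel_with H.
Qed.

End PhiOnM.

Section PhiOnN.
Variables (G : GMR) (phi : mat G -> mat G).
Implicit Types (a : gA G) (b : gB G) (m : gM G) (n : gN G).
Hypothesis hphi : lemma22_hyp phi.
Hypotheses (hA : two_torsion_free (gA G)) (hB : two_torsion_free (gB G)).

Let hphi_flip := flip_map_hyp hphi.

Lemma crossN_skewl n n' : pNM n (e12 (phi (iN n'))) + pNM n' (e12 (phi (iN n))) = 0.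
Proof. by apply: (crossM_skewl hphi_flip). Qed.

Lemma crossN_skewr n n' : pMN (e12 (phi (iN n))) n' + pMN (e12 (phi (iN n'))) n = 0.
Proof. by apply: (crossM_skewr hphi_flip). Qed.

Lemma phi_iN_e12_lBN b n : e12 (phi (iN (lBN b n))) = rMB (e12 (phi (iN n))) b.
Proof. by apply: (phi_iM_e21_lAM hphi_flip). Qed.

Lemma phi_iN_e12_rNA n a : e12 (phi (iN (rNA n a))) = lAM a (e12 (phi (iN n))).
Proof. by apply: (phi_iM_e21_rMB hphi_flip). Qed.

Lemma phi_iN_e22 n : e22 (phi (iN n)) = - pNM n (e12 (phi (P2 G))).
Proof. by apply: (phi_iM_e11 hphi_flip). Qed.

Lemma phi_iN_e11 n : e11 (phi (iN n)) = pMN (e12 (phi (P2 G))) n.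
Proof. by apply: (phi_iM_e22 hphi_flip). Qed.

Lemma phi_iN_e21_lBN b n :
  e21 (phi (iN (lBN b n))) = lBN (e22 (phi (iB b))) n + lBN b (e21 (phi (iN n)))
    - lBN b (rNA n (e11 (phi (P1 G)))).
Proof. by apply: (phi_iM_e12_lAM hphi_flip). Qed.

Lemma phi_iN_e21_rNA n a :
  e21 (phi (iN (rNA n a))) = rNA (e21 (phi (iN n))) a - lBN (e22 (phi (P2 G))) (rNA n a)
    + rNA n (e11 (phi (iA a))).
Proof. by apply: (phi_iM_e12_rMB hphi_flip). Qed.

Lemma lBN_phiP2 n : lBN (e22 (phi (P2 G))) n = rNA n (e11 (phi (P1 G))).
Proof. by apply: (lAM_phiP1 hphi_flip). Qed.

End PhiOnN.

Definition phiP1 G (phi : mat G -> mat G) := e11 (phi (P1 G)).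
Definition phiP2 G (phi : mat G -> mat G) := e22 (phi (P2 G)).
(* Locked, so that rewriting with the bimodule laws never unfolds them. *)
HB.lock Definition derA G (phi : mat G -> mat G) (a : gA G) := e11 (phi (iA a)) - phiP1 phi * a.
HB.lock Definition derB G (phi : mat G -> mat G) (b : gB G) := e22 (phi (iB b)) - phiP2 phi * b.
HB.lock Definition derM G (phi : mat G -> mat G) (m : gM G) := e12 (phi (iM m)) - lAM (phiP1 phi) m.
HB.lock Definition derN G (phi : mat G -> mat G) (n : gN G) := e21 (phi (iN n)) - lBN (phiP2 phi) n.
HB.lock Definition crossM G (phi : mat G -> mat G) (m : gM G) := e21 (phi (iM m)).
HB.lock Definition crossN G (phi : mat G -> mat G) (n : gN G) := e12 (phi (iN n)).

Section Varphi.
Variables (G : GMR) (phi : mat G -> mat G).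
Implicit Types (X : mat G) (a : gA G) (b : gB G) (m : gM G) (n : gN G).

Hypothesis hphi : lemma22_hyp phi.
Hypotheses (hA : two_torsion_free (gA G)) (hB : two_torsion_free (gB G)).
Hypothesis hM : M_faithful G.

Let phi_add := lemma22_add hphi.

Lemma phiP1_comm a : phiP1 phi * a = a * phiP1 phi.
Proof.
apply/eqP; rewrite -subr_eq0; apply/eqP; apply: hM.1 => m.
by rewrite lAM_addl lAMNl !lAM_mul !(lAM_phiP1 hphi hA hB) -M_bimod subrr.
Qed.

Lemma phiP2_comm b : phiP2 phi * b = b * phiP2 phi.
Proof.
apply/eqP; rewrite -subr_eq0; apply/eqP; apply: hM.2 => m.
by rewrite rMB_addr rMBNr !rMB_mul -!(lAM_phiP1 hphi hA hB) M_bimod subrr.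
Qed.

Lemma derA_add a a' : derA phi (a + a') = derA phi a + derA phi a'.
Proof. by rewrite derA.unlock iAD phi_add /= mulrDr; zmod_cancel. Qed.
Lemma derB_add b b' : derB phi (b + b') = derB phi b + derB phi b'.
Proof. by rewrite derB.unlock iBD phi_add /= mulrDr; zmod_cancel. Qed.
Lemma derM_add m m' : derM phi (m + m') = derM phi m + derM phi m'.
Proof. by rewrite derM.unlock iMD phi_add /= lAM_addr; zmod_cancel. Qed.
Lemma derN_add n n' : derN phi (n + n') = derN phi n + derN phi n'.
Proof. by rewrite derN.unlock iND phi_add /= lBN_addr; zmod_cancel. Qed.
Lemma crossM_add m m' : crossM phi (m + m') = crossM phi m + crossM phi m'.
Proof. by rewrite crossM.unlock iMD phi_add. Qed.
Lemma crossN_add n n' : crossN phi (n + n') = crossN phi n + crossN phi n'.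
Proof. by rewrite crossN.unlock iND phi_add. Qed.

Lemma derA0 : derA phi 0 = 0. Proof. exact: additive_map0 derA_add. Qed.
Lemma derB0 : derB phi 0 = 0. Proof. exact: additive_map0 derB_add. Qed.
Lemma derM0 : derM phi 0 = 0. Proof. exact: additive_map0 derM_add. Qed.
Lemma derN0 : derN phi 0 = 0. Proof. exact: additive_map0 derN_add. Qed.
Lemma crossM0 : crossM phi 0 = 0. Proof. exact: additive_map0 crossM_add. Qed.
Lemma crossN0 : crossN phi 0 = 0. Proof. exact: additive_map0 crossN_add. Qed.

Lemma derA1 : derA phi 1 = 0. Proof. by rewrite derA.unlock mulr1 subrr. Qed.

Lemma derM_lAM a m : derM phi (lAM a m) = lAM (derA phi a) m + lAM a (derM phi m).
Proof.
rewrite derM.unlock derA.unlock (phi_iM_e12_lAM hphi hA hB).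
rewrite !lAM_addl !lAMNl !lAM_addr !lAMNr !lAM_mul !(lAM_phiP1 hphi hA hB) !M_bimod.
zmod_cancel.
Qed.

Lemma derM_rMB m b : derM phi (rMB m b) = rMB (derM phi m) b + rMB m (derB phi b).
Proof.
rewrite derM.unlock derB.unlock (phi_iM_e12_rMB hphi hA hB).
rewrite !rMB_addl !rMBNl !rMB_addr !rMBNr !(lAM_phiP1 hphi hA hB) -!rMB_mul !phiP2_comm.
zmod_cancel.
Qed.

Lemma derN_lBN b n : derN phi (lBN b n) = lBN (derB phi b) n + lBN b (derN phi n).
Proof.
rewrite derN.unlock derB.unlock (phi_iN_e21_lBN hphi hA hB).
rewrite !lBN_addl !lBNNl !lBN_addr !lBNNr !lBN_mul !(lBN_phiP2 hphi hA hB) !N_bimod.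
zmod_cancel.
Qed.

Lemma derN_rNA n a : derN phi (rNA n a) = rNA (derN phi n) a + rNA n (derA phi a).
Proof.
rewrite derN.unlock derA.unlock (phi_iN_e21_rNA hphi hA hB).
rewrite !rNA_addl !rNANl !rNA_addr !rNANr !(lBN_phiP2 hphi hA hB) -!rNA_mul !phiP1_comm.
zmod_cancel.
Qed.

Lemma crossM_lAM a m : crossM phi (lAM a m) = rNA (crossM phi m) a.
Proof. by rewrite crossM.unlock; apply: phi_iM_e21_lAM. Qed.
Lemma crossM_rMB m b : crossM phi (rMB m b) = lBN b (crossM phi m).
Proof. by rewrite crossM.unlock; apply: phi_iM_e21_rMB. Qed.
Lemma crossN_rNA n a : crossN phi (rNA n a) = lAM a (crossN phi n).
Proof. by rewrite crossN.unlock; apply: phi_iN_e12_rNA. Qed.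
Lemma crossN_lBN b n : crossN phi (lBN b n) = rMB (crossN phi n) b.
Proof. by rewrite crossN.unlock; apply: phi_iN_e12_lBN. Qed.

Lemma pMN_crossM m : pMN m (crossM phi m) = 0.
Proof. by apply: hA; rewrite crossM.unlock; apply: crossM_skewl. Qed.
Lemma pNM_crossM m : pNM (crossM phi m) m = 0.
Proof. by apply: hB; rewrite crossM.unlock; apply: crossM_skewr. Qed.
Lemma pNM_crossN n : pNM n (crossN phi n) = 0.
Proof. by apply: hB; rewrite crossN.unlock; apply: crossN_skewl. Qed.
Lemma pMN_crossN n : pMN (crossN phi n) n = 0.
Proof. by apply: hA; rewrite crossN.unlock; apply: crossN_skewr. Qed.

Lemma derA_mul a a' : derA phi (a * a') = derA phi a * a' + a * derA phi a'.
Proof.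
apply/eqP; rewrite -subr_eq0; apply/eqP; apply: hM.1 => m.
have e : derM phi (lAM a (lAM a' m)) = derM phi (lAM (a * a') m) by rewrite lAM_mul.
rewrite !derM_lAM !lAM_addr !lAM_mul in e.
by rewrite lAM_addl lAMNl (lAM_addl (derA phi a * a')) !lAM_mul; cancel_with e.
Qed.

Lemma derB_mul b b' : derB phi (b * b') = derB phi b * b' + b * derB phi b'.
Proof.
apply/eqP; rewrite -subr_eq0; apply/eqP; apply: hM.2 => m.
have e : derM phi (rMB (rMB m b) b') = derM phi (rMB m (b * b')) by rewrite rMB_mul.
rewrite !derM_rMB !rMB_addl !rMB_mul in e.
by rewrite rMB_addr rMBNr (rMB_addr m (derB phi b * b')) !rMB_mul; cancel_with e.
Qed.

Lemma phi_mone : phi (mone G) = Mat (phiP1 phi) 0 0 (phiP2 phi).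
Proof.
rewrite mone_decomp phi_add; apply: mat_ext => /=.
- by rewrite (phi_iB_e11 hphi hA) addr0.
- by rewrite (phi_iA_e12 hphi) (phi_iB_e12 hphi) lAM_1 rMB_1 addNr.
- by rewrite (phi_iA_e21 hphi) (phi_iB_e21 hphi) lBN_1 rNA_1 subrr.
- by rewrite (phi_iA_e22 hphi hB) add0r.
Qed.

Lemma phi_mone_comm X : phi (mone G) * X = X * phi (mone G).
Proof.
rewrite phi_mone; apply: mat_ext => /=; gmr_simpl;
  by rewrite ?phiP1_comm ?phiP2_comm ?(lAM_phiP1 hphi hA hB) ?(lBN_phiP2 hphi hA hB).
Qed.

Lemma varphi_mat X : varphi phi X =
  Mat (derA phi (e11 X)) (derM phi (e12 X) + crossN phi (e21 X))
      (crossM phi (e12 X) + derN phi (e21 X)) (derB phi (e22 X)).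
Proof.
have hA12 := phi_iA_e12 hphi; have hB12 := phi_iB_e12 hphi.
have hA21 := phi_iA_e21 hphi; have hB21 := phi_iB_e21 hphi.
have hM11 := phi_iM_e11 hphi hA; have hM22 := phi_iM_e22 hphi hB.
have hN11 := phi_iN_e11 hphi hA; have hN22 := phi_iN_e22 hphi hB.
case: X => a m n b.
rewrite /varphi /Tphi derA.unlock derB.unlock derM.unlock derN.unlock.
rewrite crossM.unlock crossN.unlock /phiP1 /phiP2.
change (P1 G) with (iA (1 : gA G)); change (P2 G) with (iB (1 : gB G)).
rewrite mone_decomp mat_decomp !phi_add.
(* Freeze phi(P2)_12 and phi(P1)_21, otherwise hB12 and hA21 rewrite them
   forever ([P2 G] is [iB 1], [P1 G] is [iA 1]). *)
move: hA12 hB12 hA21 hB21 hM11 hM22 hN11 hN22.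
set m0 := e12 (phi (iB 1)); set n0 := e21 (phi (iA 1)); clearbody m0 n0.
move=> hA12 hB12 hA21 hB21 hM11 hM22 hN11 hN22.
apply: mat_ext => /=;
  rewrite ?(phi_iB_e11 hphi hA) ?(phi_iA_e22 hphi hB);
  rewrite ?hA12 ?hB12 ?hA21 ?hB21 ?hM11 ?hM22 ?hN11 ?hN22; gmr_simpl;
  rewrite ?addNr ?subrr; gmr_simpl; zmod_cancel.
Qed.

Lemma varphi_add X Y : varphi phi (X + Y) = varphi phi X + varphi phi Y.
Proof.
rewrite !varphi_mat; apply: mat_ext => /=;
  by rewrite ?derA_add ?derB_add ?derM_add ?derN_add ?crossM_add ?crossN_add; zmod_cancel.
Qed.

Lemma varphi_mone : varphi phi 1 = 0.
Proof.
change ((phi 1 - phi 1 * 1) + (Tphi phi * 1 - 1 * Tphi phi) = 0).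
by rewrite !mulr1 !mul1r !subrr addr0.
Qed.

Lemma varphi_jordan_orthogonal : jordan_orthogonal (varphi phi).
Proof.
apply: (@jordan_orthogonalD _ (fun U => phi U - phi (mone G) * U)
                              (fun U => Tphi phi * U - U * Tphi phi));
  last exact: jordan_orthogonal_inner.
apply: jordan_orthogonalD (jordan_orthogonalN _); first exact: lemma22_orthogonal hphi.
exact: jordan_orthogonal_central phi_mone_comm.
Qed.

Lemma derA_pMN_defect m n :
  let K := derA phi (pMN m n) - pMN (derM phi m) n - pMN m (derN phi n) in
  K + pMN m n * K = 0.
Proof.
have := jordan_orthogonal_idempotent varphi_add varphi_mone varphi_jordan_orthogonal
          (idem_mnK m n).
rewrite varphi_mat => /(congr1 (@e11 G)) /= /(two_torsion_free_inj hA).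
rewrite derA_add derA1 add0r !derM_add !(additive_mapN derM_add) !crossM_add.
rewrite !(additive_mapN crossM_add) derM_lAM crossM_lAM.
rewrite !mulrDl !mulrDr !pMN_addl !pMN_addr; gmr_simpl; rewrite ?pMN_addl ?opprD; gmr_simpl.
rewrite !pMN_lA !pMN_rA !pMN_crossM pMN_crossN; gmr_simpl => e.
by rewrite /= ?mulrBr; cancel_with e.
Qed.

(* The defect K of m n satisfies K + (m n) K = 0; that of (- m) n is - K, which
   turns the identity into K - (m n) K = 0. *)
Lemma derA_pMN m n : derA phi (pMN m n) = pMN (derM phi m) n + pMN m (derN phi n).
Proof.
have /= e1 := derA_pMN_defect m n; have /= e2 := derA_pMN_defect (- m) n.
rewrite !pMNNl (additive_mapN derA_add) (additive_mapN derM_add) !pMNNl in e2.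
have e := etrans e1 (esym e2); rewrite !mulrDr !mulrN in e.
by apply/eqP; rewrite -subr_eq0; apply/eqP; apply: hA; cancel_with e.
Qed.

Lemma derB_pNM_defect m n :
  let L := derB phi (pNM n m) - pNM n (derM phi m) - pNM (derN phi n) m in
  L + pNM n m * L + L * pNM n m = 0.
Proof.
have := jordan_orthogonal_idempotent varphi_add varphi_mone varphi_jordan_orthogonal
          (idem_mnK m n).
rewrite varphi_mat => /(congr1 (@e22 G)) /= /(two_torsion_free_inj hB).
rewrite (additive_mapN derB_add) !derM_add !(additive_mapN derM_add) !crossM_add.
rewrite !(additive_mapN crossM_add) derM_lAM crossM_lAM derA_pMN.
rewrite !mulrDl !mulrDr !pNM_addl !pNM_addr; gmr_simpl.
rewrite ?pNM_addl ?pNM_addr ?lAM_addl ?opprD; gmr_simpl.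
rewrite ?pNM_addl ?pNM_addr ?opprD; gmr_simpl.
rewrite !assoc_MNM ?pNM_bal ?assoc_MNM !pNM_rB ?pNM_crossM ?pNM_crossN; gmr_simpl => e.
by rewrite /=; cancel_with e.
Qed.

Lemma derB_pNM m n : derB phi (pNM n m) = pNM n (derM phi m) + pNM (derN phi n) m.
Proof.
have /= e1 := derB_pNM_defect m n; have /= e2 := derB_pNM_defect (- m) n.
rewrite !pNMNr (additive_mapN derB_add) (additive_mapN derM_add) !pNMNr in e2.
have e := etrans e1 (esym e2); rewrite !mulrDr !mulrDl !mulrN !mulNr in e.
by apply/eqP; rewrite -subr_eq0; apply/eqP; apply: hB; cancel_with e.
Qed.

Ltac jordan_by_components :=
  rewrite /jder_at !varphi_mat; apply: mat_ext => /=; gmr_simpl;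
  rewrite ?derA0 ?derB0 ?derM0 ?derN0 ?crossM0 ?crossN0; gmr_simpl;
  rewrite ?derM_lAM ?derM_rMB ?derN_lBN ?derN_rNA ?crossM_lAM ?crossM_rMB ?crossN_rNA
    ?crossN_lBN ?derA_add ?derB_add ?derA_mul ?derB_mul ?derA_pMN ?derB_pNM;
  gmr_simpl; zmod_cancel.

Lemma jder_iA_iM a m : jder_at phi (iA a) (iM m). Proof. jordan_by_components. Qed.
Lemma jder_iB_iN b n : jder_at phi (iB b) (iN n). Proof. jordan_by_components. Qed.
Lemma jder_iA_iN a n : jder_at phi (iA a) (iN n). Proof. jordan_by_components. Qed.
Lemma jder_iB_iM b m : jder_at phi (iB b) (iM m). Proof. jordan_by_components. Qed.
Lemma jder_iA_iA a a' : jder_at phi (iA a) (iA a'). Proof. jordan_by_components. Qed.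
Lemma jder_iB_iB b b' : jder_at phi (iB b) (iB b'). Proof. jordan_by_components. Qed.
Lemma jder_iM_iN m n : jder_at phi (iM m) (iN n). Proof. jordan_by_components. Qed.
Lemma jder_iN_iM n m : jder_at phi (iN n) (iM m). Proof. jordan_by_components. Qed.

End Varphi.

Theorem lemma2p6 (G : GMR)
  (hA : two_torsion_free (gA G)) (hB : two_torsion_free (gB G))
  (hM : M_faithful G)
  (phi : mat G -> mat G) (hphi : lemma22_hyp phi) :
  let P1 := P1 G in let P2 := P2 G in
  (forall X Y, jder_at phi (corner P1 P1 X) (corner P1 P2 Y)) /\
  (forall X Y, jder_at phi (corner P2 P2 X) (corner P2 P1 Y)) /\
  (forall X Y, jder_at phi (corner P1 P1 X) (corner P2 P1 Y)) /\
  (forall X Y, jder_at phi (corner P2 P2 X) (corner P1 P2 Y)) /\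
  (forall X Y, jder_at phi (corner P1 P1 X) (corner P1 P1 Y)) /\
  (forall X Y, jder_at phi (corner P2 P2 X) (corner P2 P2 Y)) /\
  (forall X Y, jder_at phi (corner P1 P2 X) (corner P2 P1 Y)) /\
  (forall X Y, jder_at phi (corner P2 P1 X) (corner P1 P2 Y)).
Proof.
rewrite /=; split; [|split; [|split; [|split; [|split; [|split; [|split]]]]]] => X Y;
  rewrite ?corner11 ?corner12 ?corner21 ?corner22.
- exact: jder_iA_iM.
- exact: jder_iB_iN.
- exact: jder_iA_iN.
- exact: jder_iB_iM.
- exact: jder_iA_iA.
- exact: jder_iB_iB.
- exact: jder_iM_iN.
- exact: jder_iN_iM.
Qed.
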